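(* Let $R$ be a commutative ring in which every prime ideal is maximal. Let $X$ be the set of maximal ideals $P$ of $R$ such that $PR_P=0$, and let $A$ be the kernel of the natural map $R\to\prod_{P\in X}R_P$. If $R$ is P-coherent, then $A$ is a pure ideal of $R$ (a pure submodule of $R$) and $X=V(A)$.
   Context: $R$ is P-coherent if every principal ideal is finitely presented. An ideal $A$ is pure if $A\to R$ remains injective after tensoring with every module. $V(A)$ is the set of prime ideals containing $A$. *)

From mathcomp Require Import all_boot all_order all_algebra.
Set Implicit Arguments. Unset Strict Implicit. Unset Printing Implicit Defensive.
Import GRing.Theory.
Local Open Scope ring_scope.

Section CommAlg.
Variable R : comPzRingType.

Definition is_ideal (I : R -> Prop) : Prop :=
  [/\ I 0, (forall x y, I x -> I y -> I (x + y)) & (forall r x, I x -> I (r * x))].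

Definition prime_ideal (P : R -> Prop) : Prop :=
  [/\ is_ideal P, ~ P 1 & (forall a b, P (a * b) -> P a \/ P b)].

Definition maximal_ideal (P : R -> Prop) : Prop :=
  [/\ is_ideal P, ~ P 1 &
     (forall I : R -> Prop, is_ideal I -> (forall x, P x -> I x) -> ~ I 1 ->
        forall x, I x -> P x)].

Definition principal (a : R) : R -> Prop := fun x => exists r, x = r * a.

(* An ideal I, viewed as an R-module, is finitely presented: there is a finite
   generating family g of I whose module of relations
   {c in R^n | sum c_i g_i = 0} is finitely generated. *)
Definition fin_presented_ideal (I : R -> Prop) : Prop :=
  exists n (g : 'I_n -> R),
    [/\ (forall i, I (g i)),
        (forall x, I x -> exists c : 'I_n -> R, x = \sum_i c i * g i) &
        exists k (r : 'I_k -> 'I_n -> R),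
          (forall j, \sum_i r j i * g i = 0) /\
          (forall c : 'I_n -> R, \sum_i c i * g i = 0 ->
             exists d : 'I_k -> R, forall i, c i = \sum_j d j * r j i)].

Definition P_coherent : Prop := forall a : R, fin_presented_ideal (principal a).

Definition balanced (M : lmodType R) (A : R -> Prop) (N : zmodType)
    (b : M -> R -> N) : Prop :=
  [/\ (forall m m' a, A a -> b (m + m') a = b m a + b m' a),
      (forall m a a', A a -> A a' -> b m (a + a') = b m a + b m a') &
      (forall r m a, A a -> b (r *: m) a = b m (r * a))].

(* The element sum_i m_i (x) a_i of M (x)_R A is zero: by the universal property
   of the tensor product, it is killed by every balanced map. *)
Definition tensor_zero (M : lmodType R) (A : R -> Prop) (n : nat)
    (m : 'I_n -> M) (a : 'I_n -> R) : Prop :=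
  forall (N : zmodType) (b : M -> R -> N), @balanced M A N b ->
    \sum_i b (m i) (a i) = 0.

(* A is pure: for every module M, the map M (x) A -> M (x) R = M,
   m (x) a |-> a m, is injective. *)
Definition pure_ideal (A : R -> Prop) : Prop :=
  is_ideal A /\
  forall (M : lmodType R) (n : nat) (m : 'I_n -> M) (a : 'I_n -> R),
    (forall i, A (a i)) -> \sum_i a i *: m i = 0 -> @tensor_zero M A n m a.

(* x maps to 0 in the localization R_P: some s outside P kills x. *)
Definition zero_in_loc (P : R -> Prop) (x : R) : Prop :=
  exists s, ~ P s /\ s * x = 0.

Definition Xset (P : R -> Prop) : Prop :=
  maximal_ideal P /\ forall p, P p -> zero_in_loc P p.

Definition kerX : R -> Prop :=
  fun x => forall P, Xset P -> zero_in_loc P x.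

Definition Vset (A : R -> Prop) (P : R -> Prop) : Prop :=
  prime_ideal P /\ forall x, A x -> P x.

End CommAlg.

(* Every element of a prime P is nilpotent in R_P, because primes are maximal.
   If P contains A but some p in P does not vanish in R_P, then ann(p) lies in
   P; by P-coherence ann(p) is finitely generated, and one s outside P kills a
   power of p and powers of all the generators. For Q in X, either p is outside
   Q or, p vanishing in R_Q, some generator of ann(p) is outside Q; either way s
   vanishes in R_Q. So s lies in A but not in P, which is absurd: V(A) = X.
   For a in A, no prime contains ann(a) + A (it would lie in V(A) = X, where a
   vanishes), so a = ab with b in A; an ideal with this property is pure, since
   finitely many of its elements share such a b. *)
From mathcomp Require Import all_boot all_order all_algebra.
From mathcomp Require Import ring.
From mathcomp Require Import boolp classical_sets.
Set Implicit Arguments. Unset Strict Implicit. Unset Printing Implicit Defensive.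
Import GRing.Theory.
Local Open Scope ring_scope.
Local Open Scope classical_set_scope.

Section Ideals.
Variable R : comPzRingType.
Implicit Types (I J P Q : R -> Prop) (a b x y : R).

Lemma ideal0 I : is_ideal I -> I 0.
Proof. by case. Qed.

Lemma idealD I x y : is_ideal I -> I x -> I y -> I (x + y).
Proof. by case=> _ + _; apply. Qed.

Lemma idealMl I r x : is_ideal I -> I x -> I (r * x).
Proof. by case=> _ _; apply. Qed.

Lemma idealMr I r x : is_ideal I -> I x -> I (x * r).
Proof. by rewrite mulrC; apply: idealMl. Qed.

Lemma ideal_sum I n (f : 'I_n -> R) :
  is_ideal I -> (forall i, I (f i)) -> I (\sum_i f i).
Proof.
move=> hI hf; apply: (big_ind I) => //; first exact: ideal0.
by move=> x y; apply: idealD.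
Qed.

Lemma ideal_sum_notin I n (d g : 'I_n -> R) :
  is_ideal I -> ~ I (\sum_i d i * g i) -> exists i, ~ I (g i).
Proof.
move=> hI; apply: contra_notP => /forallNP hg.
by apply: ideal_sum => // i; apply: idealMl => //; apply: contrapT.
Qed.

Lemma is_ideal_zero : is_ideal (fun x : R => x = 0).
Proof. by split=> [|x y -> ->|r x ->]; rewrite ?addr0 ?mulr0. Qed.

Lemma is_ideal_principal a : is_ideal (principal a).
Proof.
split; first by exists 0; rewrite mul0r.
- by move=> _ _ [r ->] [s ->]; exists (r + s); rewrite mulrDl.
- by move=> r _ [s ->]; exists (r * s); rewrite mulrA.
Qed.

Definition annihilator a : R -> Prop := fun x => x * a = 0.

Lemma is_ideal_annihilator a : is_ideal (annihilator a).
Proof.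
rewrite /annihilator; split=> [|x y hx hy|r x hx]; first exact: mul0r.
  by rewrite mulrDl hx hy addr0.
by rewrite -mulrA hx mulr0.
Qed.

Definition ideal_add I J : R -> Prop := fun x => exists y z, [/\ I y, J z & x = y + z].

Lemma is_ideal_add I J : is_ideal I -> is_ideal J -> is_ideal (ideal_add I J).
Proof.
move=> hI hJ; split.
- by exists 0, 0; rewrite addr0; split=> //; apply: ideal0.
- move=> _ _ [y [z [hy hz ->]]] [y' [z' [hy' hz' ->]]].
  by exists (y + y'), (z + z'); split; [apply: idealD|apply: idealD|ring].
- move=> r _ [y [z [hy hz ->]]].
  by exists (r * y), (r * z); split; [apply: idealMl|apply: idealMl|ring].
Qed.

Lemma ideal_addl I J : is_ideal J -> I `<=` ideal_add I J.
Proof. by move=> hJ x hx; exists x, 0; rewrite addr0; split=> //; apply: ideal0. Qed.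

Lemma ideal_addr I J : is_ideal I -> J `<=` ideal_add I J.
Proof. by move=> hI x hx; exists 0, x; rewrite add0r; split=> //; apply: ideal0. Qed.

Lemma prime_ideal_expn P x n : prime_ideal P -> ~ P x -> ~ P (x ^+ n).
Proof.
case=> _ P1 Pmul Px; elim: n => [|n IH]; first by rewrite expr0.
by rewrite exprS => /Pmul [].
Qed.

Lemma prime_ideal_prod P n (f : 'I_n -> R) :
  prime_ideal P -> (forall i, ~ P (f i)) -> ~ P (\prod_i f i).
Proof.
case=> _ P1 Pmul hf.
by apply: (big_ind (fun x => ~ P x)) => // x y Px Py /Pmul [].
Qed.

Lemma maximal_ideal_prime P : maximal_ideal P -> prime_ideal P.
Proof.
case=> hP P1 Pmax; split=> // a b Pab; have [Pa|Pa] := pselect (P a); first by left.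
right; have hJ := is_ideal_add hP (is_ideal_principal a).
have [[p [_ [hp [r ->] e]]]|J1] := pselect (ideal_add P (principal a) 1).
  have -> : b = p * b + r * (a * b) by rewrite -[LHS]mulr1 e; ring.
  by apply: idealD => //; [apply: idealMr | apply: idealMl].
case: Pa; apply: (Pmax _ hJ _ J1); first exact: ideal_addl (is_ideal_principal a).
by apply: ideal_addr => //; exists 1; rewrite mul1r.
Qed.

End Ideals.

Section PrimeAvoidance.
Variables (R : comPzRingType) (I S : R -> Prop).
Hypotheses (hI : is_ideal I) (IS : forall x, I x -> ~ S x).

Definition avoiding (B : R -> Prop) :=
  [/\ is_ideal B, I `<=` B & forall x, B x -> ~ S x].

Lemma avoiding_chain_bigcup (F : set (set R)) X0 :
  F `<=` [set B | avoiding B \/ B = set0] -> total_on F subset ->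
  F X0 -> avoiding X0 -> avoiding (\bigcup_(X in F) X).
Proof.
move=> hF Ftot FX0 [hX0 IX0 X0S].
have avX X x : F X -> X x -> avoiding X.
  by move=> FX Xx; case: (hF X FX) => // Xempty; rewrite Xempty in Xx.
split.
- split; first by exists X0 => //; apply: ideal0.
  + move=> x y [X FX Xx] [Y FY Yy].
    have [XY|YX] := Ftot X Y FX FY.
      exists Y => //; case: (avX Y y FY Yy) => hY _ _.
      by apply: idealD => //; apply: XY.
    exists X => //; case: (avX X x FX Xx) => hX _ _.
    by apply: idealD => //; apply: YX.
  + move=> r x [X FX Xx]; exists X => //.
    by case: (avX X x FX Xx) => hX _ _; apply: idealMl.
- by move=> x Ix; exists X0 => //; apply: IX0.
- by move=> x [X FX Xx]; case: (avX X x FX Xx) => _ _; apply.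
Qed.

Lemma exists_maximal_avoiding :
  exists A, avoiding A /\ forall B, A `<` B -> ~ avoiding B.
Proof.
have [|A [hA Amax]] := @Zorn_bigcup R [set B | avoiding B \/ B = set0].
  move=> F hF Ftot.
  have [[X0 [FX0 hX0]]|noX] := pselect (exists X, F X /\ avoiding X).
    by left; apply: avoiding_chain_bigcup FX0 hX0.
  right; rewrite -subset0 => x [X FX Xx].
  case: (hF X FX) => [hX|Xempty]; last by rewrite Xempty in Xx.
  by case: noX; exists X.
suff hAav : avoiding A by exists A; split=> // B AB hB; apply: (Amax B AB); left.
case: hA => // A0; exfalso; apply: (Amax I); last by left; split.
by rewrite A0; split=> // /(_ 0 (ideal0 hI)).
Qed.

Hypotheses (S1 : S 1) (SM : forall x y, S x -> S y -> S (x * y)).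

Lemma maximal_avoiding_prime A :
  avoiding A -> (forall B, A `<` B -> ~ avoiding B) -> prime_ideal A.
Proof.
move=> [hA IA AS] Amax; split=> // [/AS//|a b Aab].
have escape c : ~ A c -> exists y r, A y /\ S (y + r * c).
  move=> Ac; pose B := ideal_add A (principal c).
  have hB : is_ideal B := is_ideal_add hA (is_ideal_principal c).
  have AB : A `<=` B := ideal_addl (is_ideal_principal c).
  apply: contrapT => noS; apply: (Amax B).
    split=> // /(_ c); apply: contra_not Ac; apply.
    by apply: ideal_addr => //; exists 1; rewrite mul1r.
  split=> // [x /IA /AB //|_ [y [_ [Ay [r ->] ->]]] Sx].
  by apply: noS; exists y, r.
apply: contrapT => /not_orP [Aa Ab].
have [y1 [r1 [Ay1 Sa]]] := escape a Aa.
have [y2 [r2 [Ay2 Sb]]] := escape b Ab.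
apply: (AS _ _ (SM Sa Sb)).
have -> : (y1 + r1 * a) * (y2 + r2 * b) =
    y1 * (y2 + r2 * b) + r1 * (y2 * a) + (r1 * r2) * (a * b) by ring.
apply: idealD => //; last exact: idealMl.
by apply: idealD => //; [apply: idealMr | apply: idealMl => //; apply: idealMr].
Qed.

Lemma exists_prime_avoiding :
  exists Q, [/\ prime_ideal Q, I `<=` Q & forall x, Q x -> ~ S x].
Proof.
have [A [hA Amax]] := exists_maximal_avoiding.
by exists A; have [? ? ?] := hA; split=> //; apply: maximal_avoiding_prime.
Qed.

End PrimeAvoidance.

Section Localization.
Variable R : comPzRingType.
Implicit Types (P Q : R -> Prop) (a p s x : R).

Lemma zero_in_loc_expn P x n s :
  prime_ideal P -> ~ P x -> x ^+ n * s = 0 -> zero_in_loc P s.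
Proof. by move=> hP Px xs0; exists (x ^+ n); split=> //; apply: prime_ideal_expn. Qed.

Lemma zero_in_loc_family P k (f : 'I_k -> R) :
  prime_ideal P -> (forall j, zero_in_loc P (f j)) ->
  exists s, ~ P s /\ forall j, s * f j = 0.
Proof.
move=> hP /choice [t ht]; exists (\prod_j t j); split.
  by apply: prime_ideal_prod => // j; case: (ht j).
move=> j; rewrite (bigD1 j) //= mulrAC mulrC.
by case: (ht j) => _ ->; rewrite mulr0.
Qed.

Lemma prime_nilpotent_in_loc
    (hdim : forall P : R -> Prop, prime_ideal P -> maximal_ideal P) P p :
  prime_ideal P -> P p -> exists n, zero_in_loc P (p ^+ n).
Proof.
move=> hP Pp; apply: contrapT => /forallNP p_live.
pose S x := exists s n, ~ P s /\ x = s * p ^+ n.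
have [|||Q [hQ _ QS]] :=
  @exists_prime_avoiding R (fun x => x = 0) S (@is_ideal_zero R).
- by move=> _ -> [s [n [Ps e]]]; apply: (p_live n); exists s; rewrite e.
- by exists 1, 0%N; split; [case: hP | rewrite mulr1].
- move=> _ _ [s [n [Ps ->]]] [t [m [Pt ->]]]; exists (s * t), (n + m)%N.
  by split; [case: hP => _ _ Pmul /Pmul [] | rewrite exprD; ring].
have QP : Q `<=` P.
  move=> x Qx; apply: contrapT => Px.
  by apply: (QS x Qx); exists x, 0%N; rewrite mulr1.
have [hQi _ Qmax] := hdim Q hQ; have [hPi P1 _] := hP.
by apply: (QS p (Qmax P hPi QP P1 p Pp)); exists 1, 1%N; rewrite mul1r expr1.
Qed.

Definition finitely_generated (I : R -> Prop) :=
  exists k (g : 'I_k -> R), (forall j, I (g j)) /\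
    forall x, I x -> exists d : 'I_k -> R, x = \sum_j d j * g j.

Lemma P_coherent_annihilator (hcoh : P_coherent R) a :
  finitely_generated (annihilator a).
Proof.
have [n [g [hg hgen [k [r [hr hrel]]]]]] := hcoh a.
have [t ht] := choice hg.
have [c hc] := hgen a (ex_intro _ 1 (esym (mul1r a))).
pose e := \sum_i c i * t i; pose w j := \sum_i r j i * t i.
have sum_ta (f : 'I_n -> R) : (\sum_i f i * t i) * a = \sum_i f i * g i.
  by rewrite mulr_suml; apply: eq_bigr => i _; rewrite ht mulrA.
(* a = e a, so each x in ann(a) is x (1 - e) + x e, and by the relations x e is
   a combination of the w j. *)
exists k.+1, (fun j => if unlift ord0 j is Some j' then w j' else 1 - e); split.
  move=> j; rewrite /annihilator; case: unliftP => [j' _|_].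
    by rewrite sum_ta hr.
  by rewrite mulrBl mul1r sum_ta -hc subrr.
move=> x xa0.
have [d hd] : exists d : 'I_k -> R, forall i, x * c i = \sum_j d j * r j i.
  by apply: hrel; under eq_bigr do rewrite -mulrA; rewrite -mulr_sumr -hc.
exists (fun j => if unlift ord0 j is Some j' then d j' else x).
rewrite big_ord_recl unlift_none; under eq_bigr do rewrite liftK.
have -> : \sum_j d j * w j = x * e.
  rewrite /e /w mulr_sumr; under eq_bigr do rewrite mulr_sumr.
  rewrite exchange_big /=; apply: eq_bigr => i _.
  by rewrite mulrA hd mulr_suml; apply: eq_bigr => j _; rewrite mulrA.
ring.
Qed.

End Localization.

Section PureIdeal.
Variables (R : comPzRingType) (I : R -> Prop).
Hypotheses (hI : is_ideal I) (I_unit : forall a, I a -> exists b, I b /\ a = a * b).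

Lemma common_right_unit n (a : 'I_n -> R) :
  (forall i, I (a i)) -> exists e, I e /\ forall i, a i = a i * e.
Proof.
move=> Ia; have /choice [c hc] := fun i => I_unit (Ia i).
have [e [Ie he]] : exists e, I e /\ \prod_i (1 - c i) = 1 - e.
  apply: (big_ind (fun z => exists e, I e /\ z = 1 - e)).
  - by exists 0; rewrite subr0; split=> //; apply: ideal0.
  - move=> _ _ [e1 [I1 ->]] [e2 [I2 ->]].
    exists (e1 + e2 - e1 * e2); split; last by ring.
    by apply: idealD; [|apply: idealD|rewrite -mulNr; apply: idealMl].
  - by move=> i _; exists (c i); case: (hc i).
exists e; split=> // i; apply/eqP; rewrite -subr_eq0 -[X in X - _]mulr1 -mulrBr -he.
by rewrite (bigD1 i) //= mulrA mulrBr mulr1 -(hc i).2 subrr mul0r.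
Qed.

Lemma pure_ideal_of_right_units : pure_ideal I.
Proof.
split=> // M n m a Ia am0 N b [bD _ bZ].
have [e [Ie he]] := common_right_unit Ia.
have b0 : b 0 e = 0 by apply: (addrI (b 0 e)); rewrite -bD // !addr0.
rewrite (eq_bigr (fun i => b (a i *: m i) e)) => [|i _]; last first.
  by rewrite bZ // -(he i).
by rewrite -(big_morph (b^~ e) (fun x y => bD x y e Ie) b0) am0.
Qed.

End PureIdeal.

Section KernelToX.
Variable R : comPzRingType.
Implicit Types (P Q : R -> Prop) (a x : R).

Lemma kerX_ideal : is_ideal (@kerX R).
Proof.
split.
- by move=> P [[_ P1 _] _]; exists 1; rewrite mulr0.
- move=> x y Ax Ay P XP; have [hP _ Pmul] := maximal_ideal_prime XP.1.
  have [[s [Ps sx0]] [t [Pt ty0]]] := (Ax P XP, Ay P XP).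
  exists (s * t); split; first by move=> /Pmul [].
  have -> : s * t * (x + y) = t * (s * x) + s * (t * y) by ring.
  by rewrite sx0 ty0 !mulr0 addr0.
- move=> r x Ax P XP; have [s [Ps sx0]] := Ax P XP.
  by exists s; rewrite mulrCA sx0 mulr0.
Qed.

Lemma Xset_Vset P : Xset P -> Vset (@kerX R) P.
Proof.
move=> XP; have hP := maximal_ideal_prime XP.1; split=> // x Ax.
have [s [Ps sx0]] := Ax P XP; have [hPi _ Pmul] := hP.
by have /Pmul [] : P (s * x) by rewrite sx0; apply: ideal0.
Qed.

Hypotheses (hdim : forall P : R -> Prop, prime_ideal P -> maximal_ideal P)
  (hcoh : P_coherent R).

Lemma Vset_Xset P : Vset (@kerX R) P -> Xset P.
Proof.
case=> hP AP; split; first exact: hdim.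
move=> p Pp; apply: contrapT => p_live.
have annP : annihilator p `<=` P.
  by move=> x xp0; apply: contrapT => Px; apply: p_live; exists x.
have [k [g [gp0 gen]]] := P_coherent_annihilator hcoh p.
have [n0 [s0 [Ps0 s0p]]] := prime_nilpotent_in_loc hdim hP Pp.
have /choice [n hn] := fun j => prime_nilpotent_in_loc hdim hP (annP _ (gp0 j)).
have [s1 [Ps1 s1g]] := zero_in_loc_family hP hn.
have Ps : ~ P (s0 * s1) by case: hP => _ _ Pmul /Pmul [].
apply: Ps; apply: AP => Q [Qmax QX]; have hQ := maximal_ideal_prime Qmax.
have [Qp|Qp] := pselect (Q p); last first.
  apply: (zero_in_loc_expn (n := n0) hQ Qp).
  by rewrite mulrA [_ * s0]mulrC s0p mul0r.
have [t [Qt tp0]] := QX p Qp; have [d td] := gen t tp0; rewrite td in Qt.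
have [j Qg] : exists j, ~ Q (g j).
  by case: hQ => Qi _ _; apply: ideal_sum_notin Qi Qt.
apply: (zero_in_loc_expn (n := n j) hQ Qg).
by rewrite mulrCA [_ * s1]mulrC s1g mulr0.
Qed.

Lemma kerX_right_unit a : kerX a -> exists b, kerX b /\ a = a * b.
Proof.
move=> Aa; pose J := ideal_add (annihilator a) (@kerX R).
have hJ : is_ideal J := is_ideal_add (is_ideal_annihilator a) kerX_ideal.
have [[z [b [za0 Ab e]]]|J1] := pselect (J 1).
  by exists b; split=> //; rewrite -[LHS]mulr1 e mulrDr mulrC za0 add0r.
have [||| Q [hQ JQ _]] := @exists_prime_avoiding R J (fun x => x = 1) hJ.
- by move=> x Jx x1; apply: J1; rewrite -x1.
- by [].
- by move=> x y -> ->; rewrite mulr1.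
have XQ : Xset Q.
  apply: Vset_Xset; split=> // x Ax; apply: JQ.
  by apply: ideal_addr => //; apply: is_ideal_annihilator.
have [s [Qs sa0]] := Aa Q XQ.
by case: Qs; apply: JQ; apply: ideal_addl => //; apply: kerX_ideal.
Qed.

End KernelToX.

Theorem proposition3p8 (R : comPzRingType)
  (hdim : forall P : R -> Prop, prime_ideal P -> maximal_ideal P)
  (hcoh : @P_coherent R) :
  pure_ideal (@kerX R) /\
  (forall P : R -> Prop, @Xset R P <-> @Vset R (@kerX R) P).
Proof.
split.
  exact: pure_ideal_of_right_units (@kerX_ideal R) (kerX_right_unit hdim hcoh).
by move=> P; split; [apply: Xset_Vset | apply: Vset_Xset].
Qed.
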